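(* Let $X_1,\ldots,X_m$ be variables, let $r,s\ge1$, $t=rs$, let $c_1,\ldots,c_t\in\mathbb{N}^m$ with $\min_i c_{ij}=0$ for each $1\le j\le m$, and let $\rho:\{1,\ldots,r\}\times\{1,\ldots,s\}\to\{1,\ldots,t\}$ be a bijection. Then there is at most one factorisation of $\sum_{i=1}^t X^{c_i}$ of the form $(X^{a_1}+\cdots+X^{a_r})(X^{b_1}+\cdots+X^{b_s})=X^{c_1}+\cdots+X^{c_t}$ with bijection $\rho$, i.e. at most one pair of sequences $(a_1,\ldots,a_r)$, $(b_1,\ldots,b_s)$ in $\mathbb{N}^m$ with $a_i+b_j=c_{\rho(i,j)}$ for all $i,j$.
   Context: $\mathbb{N}=\{0,1,2,\ldots\}$; for $\gamma=(\gamma_1,\ldots,\gamma_m)\in\mathbb{N}^m$, $X^\gamma=\prod_{j=1}^m X_j^{\gamma_j}$. A factorisation of $\sum_{i=1}^t X^{c_i}$ of the given form is specified by sequences $(a_1,\ldots,a_r)$, $(b_1,\ldots,b_s)$ in $\mathbb{N}^m$ and a bijection $\rho:\{1,\ldots,r\}\times\{1,\ldots,s\}\to\{1,\ldots,t\}$ with $a_i+b_j=c_{\rho(i,j)}$ for all $i,j$. *)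

From mathcomp Require Import all_boot.
Set Implicit Arguments. Unset Strict Implicit. Unset Printing Implicit Defensive.

(* An exponent vector in N^m, indexed by 'I_m (0-based: X_1..X_m ~ 'I_m). *)
Definition expvec (m : nat) := 'I_m -> nat.

Definition is_factorisation (m r s : nat) (c : 'I_(r * s) -> expvec m)
  (rho : 'I_r * 'I_s -> 'I_(r * s)) (a : 'I_r -> expvec m) (b : 'I_s -> expvec m) : Prop :=
  forall (i : 'I_r) (j : 'I_s) (k : 'I_m), a i k + b j k = c (rho (i, j)) k.

From mathcomp Require Import all_boot.

Set Implicit Arguments.
Unset Strict Implicit.
Unset Printing Implicit Defensive.

(* Since exponents are natural numbers, a cell with [c (rho (i0, j0)) k = 0]
   forces [a i0 k = b j0 k = 0]; then row [j0] and column [i0] of the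
   addition table read off [a i k] and [b j k] directly from [c]. *)

Section Factorisation.

Variables (m r s : nat) (c : 'I_(r * s) -> expvec m).
Variable rho : 'I_r * 'I_s -> 'I_(r * s).

Lemma factorisation_eq0 (a : 'I_r -> expvec m) (b : 'I_s -> expvec m)
    (i : 'I_r) (j : 'I_s) (k : 'I_m) :
  is_factorisation c rho a b -> c (rho (i, j)) k = 0 -> a i k = 0 /\ b j k = 0.
Proof.
by move=> fab; rewrite -fab => /eqP; rewrite addn_eq0 => /andP[/eqP-> /eqP->].
Qed.

Lemma factorisation_coordE (a : 'I_r -> expvec m) (b : 'I_s -> expvec m)
    (i0 : 'I_r) (j0 : 'I_s) (k : 'I_m) :
  is_factorisation c rho a b -> c (rho (i0, j0)) k = 0 ->
  (forall i, a i k = c (rho (i, j0)) k) /\ (forall j, b j k = c (rho (i0, j)) k).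
Proof.
move=> fab c0; have [a0 b0] := factorisation_eq0 fab c0.
by split=> [i | j]; rewrite -fab ?a0 ?b0 ?addn0.
Qed.

End Factorisation.

Theorem mainTheorem6 (m r s : nat) (hr : 0 < r) (hs : 0 < s)
  (c : 'I_(r * s) -> expvec m)
  (hmin : forall j : 'I_m, exists i : 'I_(r * s), c i j = 0)
  (rho : 'I_r * 'I_s -> 'I_(r * s)) (hrho : bijective rho)
  (a a' : 'I_r -> expvec m) (b b' : 'I_s -> expvec m) :
  is_factorisation c rho a b -> is_factorisation c rho a' b' ->
  (forall (i : 'I_r) (k : 'I_m), a i k = a' i k) /\
  (forall (j : 'I_s) (k : 'I_m), b j k = b' j k).
Proof.
move=> fab fab'.
have zero_cell k : exists i0 j0, c (rho (i0, j0)) k = 0.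
  have [p cp0] := hmin k; have [g _ rhoK] := hrho.
  by exists (g p).1, (g p).2; rewrite -surjective_pairing rhoK.
split=> [i k | j k]; have [i0 [j0 c0]] := zero_cell k;
  have [ak bk] := factorisation_coordE fab c0;
  have [ak' bk'] := factorisation_coordE fab' c0.
- by rewrite ak ak'.
- by rewrite bk bk'.
Qed.
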